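(* (i) We have $$\sum_{k=0}^\infty\frac{(49k+1)8^k}{3^k\binom{3k}k}=81+16\sqrt3\,\pi.$$ (ii) Let $c=\frac32\left((1+\sqrt2)^{1/3}-(1+\sqrt2)^{-1/3}\right)$, so $1/c=1.11843\cdots$. If $n$ is a real number with $n<-1/3$ or $n>1/c$, then $$\sum_{k=0}^\infty\frac{a_nk-b_n}{((1-n)n^2)^k\binom{3k}k}=3n^2(n-1)\left(4\log\left(1-\frac1n\right)-9(3n^2-6n+1)\right),$$ where $$a_n=(3n+1)(3n-2)^2(9n^2-12n+1),\qquad b_n=81n^5-243n^4+189n^3-69n^2+48n-2.$$ In particular, \begin{align*} \sum_{k=0}^\infty\frac{275k-158}{2^k\binom{3k}k}&=6\log2-135,\\ \sum_{k=0}^\infty\frac{728k-17}{(-4)^k\binom{3k}k}&=-54-24\log2,\\ \sum_{k=0}^\infty\frac{(1813k-2707)8^k}{3^k\binom{3k}k}&=9(16\log3-171),\\ \sum_{k=0}^\infty\frac{5635k-1156}{(-18)^k\binom{3k}k}&=54\log\frac23-1215,\\ \sum_{k=0}^\infty\frac{63050k-15959}{(-48)^k\binom{3k}k}&=72\left(4\log\frac34-225\right),\\ \sum_{k=0}^\infty\frac{112216k-30847}{(-100)^k\binom{3k}k}&=300\log\frac45-31050,\\ \sum_{k=0}^\infty\frac{615296k-176777}{(-180)^k\binom{3k}k}&=270\left(4\log\frac56-657\right),\\ \sum_{k=0}^\infty\frac{710809k-209926}{(-294)^k\binom{3k}k}&=441\left(2\log\frac67-477\right),\\ \sum_{k=0}^\infty\frac{2910050k-875807}{(-448)^k\binom{3k}k}&=672\left(4\log\frac78-1305\right),\\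 \sum_{k=0}^\infty\frac{2721250k-830317}{(-648)^k\binom{3k}k}&=972\left(2\log\frac89-855\right),\\ \sum_{k=0}^\infty\frac{9490712k-2926289}{(-900)^k\binom{3k}k}&=1350\left(4\log\frac9{10}-2169\right),\\ \sum_{k=0}^\infty\frac{7825423k-2432776}{(-1210)^k\binom{3k}k}&=1815\left(2\log\frac{10}{11}-1341\right). \end{align*}
   Context: $\log$ is the natural logarithm. *)

From Stdlib Require Import Reals.
From Coquelicot Require Import Coquelicot.
Open Scope R_scope.

Definition binom3 (k : nat) : R := Binomial.C (3 * k)%nat k.

Definition c_const : R :=
  3 / 2 * (Rpower (1 + sqrt 2) (1 / 3) - Rpower (1 + sqrt 2) (- (1 / 3))).

Definition a_n (n : R) : R :=
  (3 * n + 1) * (3 * n - 2) ^ 2 * (9 * n ^ 2 - 12 * n + 1).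

Definition b_n (n : R) : R :=
  81 * n ^ 5 - 243 * n ^ 4 + 189 * n ^ 3 - 69 * n ^ 2 + 48 * n - 2.

(* By the beta integral, 1 / binom(3k, k) = (3k + 1) * int_0^1 t^k (1 - t)^(2k) dt, so
   sum_k (a k - b) / (q^k binom(3k, k)) = int_0^1 sum_k (a k - b) (3k + 1) w^k dt with
   w = t (1 - t)^2 / q.  Since t (1 - t)^2 <= 4/27 on [0, 1], the hypothesis |q| > 4/27
   makes the geometric-type series converge uniformly, and the inner sum is a rational
   function of w.  For q = (1 - n) n^2 the denominator q - t (1 - t)^2 splits as
   (1 - n - t) (t^2 - (1 + n) t + n^2), so the integrand has an explicit antiderivative:
   with a logarithm in general (ii), and with an arctangent for q = 3/8, n = -1/2, and the
   numerator of (i).  Finally |(1 - n) n^2| > 4/27 exactly when n < -1/3 or n > 1/c, where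
   1/c is the real root of (m - 1) m^2 = 4/27. *)

From Stdlib Require Import Reals Lra Lia Factorial.
From Coquelicot Require Import Coquelicot.
Open Scope R_scope.

Lemma is_RInt_pow_0_1 (p : nat) : is_RInt (fun t => t ^ p) 0 1 (/ (INR p + 1)).
Proof.
  assert (Hp : INR p + 1 <> 0) by (pose proof (pos_INR p); lra).
  replace (/ (INR p + 1)) with (1 ^ S p / (INR p + 1) - 0 ^ S p / (INR p + 1))
    by (rewrite pow1, pow_i by lia; field; exact Hp).
  apply (is_RInt_derive (fun t => t ^ S p / (INR p + 1))).
  - intros t _. auto_derive; [exact I|].
    change (1 * (INR (S p) * t ^ p) / (INR p + 1) = t ^ p). rewrite S_INR. field. exact Hp.
  - intros t _. apply (@ex_derive_continuous R_AbsRing R_NormedModule). auto_derive. exact I.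
Qed.

Definition beta_nat (p r : nat) : R :=
  INR (fact p) * INR (fact r) / INR (fact (p + r + 1)).

Lemma is_RInt_beta_nat (p r : nat) :
  is_RInt (fun t => t ^ p * (1 - t) ^ r) 0 1 (beta_nat p r).
Proof.
  revert p; induction r as [|r IH]; intros p.
  - replace (beta_nat p 0) with (/ (INR p + 1)).
    + apply (is_RInt_ext (fun t => t ^ p)); [intros; simpl; ring | apply is_RInt_pow_0_1].
    + unfold beta_nat. replace (p + 0 + 1)%nat with (S p) by lia.
      rewrite fact_simpl, mult_INR, S_INR. simpl (INR (fact 0)).
      pose proof (pos_INR p). field. split; [apply INR_fact_neq_0 | lra].
  - replace (beta_nat p (S r)) with (beta_nat p r - beta_nat (S p) r).
    + apply (is_RInt_ext (fun t => t ^ p * (1 - t) ^ r - t ^ S p * (1 - t) ^ r)).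
      * intros; simpl; ring.
      * exact (is_RInt_minus _ _ _ _ _ _ (IH p) (IH (S p))).
    + unfold beta_nat.
      replace (S p + r + 1)%nat with (S (p + r + 1)) by lia.
      replace (p + S r + 1)%nat with (S (p + r + 1)) by lia.
      rewrite !fact_simpl, !mult_INR.
      replace (INR (S (p + r + 1))) with (INR (S p) + INR (S r))
        by (rewrite <- plus_INR; f_equal; lia).
      rewrite !S_INR. pose proof (pos_INR p); pose proof (pos_INR r).
      field. split; [apply INR_fact_neq_0 | lra].
Qed.

Lemma binom3_pos (k : nat) : 0 < binom3 k.
Proof.
  unfold binom3, Binomial.C.
  apply Rdiv_lt_0_compat; [|apply Rmult_lt_0_compat]; apply INR_fact_lt_0.
Qed.

Lemma inv_binom3 (k : nat) : / binom3 k = INR (3 * k + 1) * beta_nat k (2 * k).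
Proof.
  unfold binom3, Binomial.C, beta_nat.
  replace (3 * k - k)%nat with (2 * k)%nat by lia.
  replace (k + 2 * k + 1)%nat with (S (3 * k)) by lia.
  replace (3 * k + 1)%nat with (S (3 * k)) by lia.
  rewrite fact_simpl, mult_INR.
  field. repeat split; try apply INR_fact_neq_0. apply not_0_INR; lia.
Qed.

Section QuadraticGeometric.

Variables al be ga : R.

Definition quad (k : nat) : R := al * INR k ^ 2 + be * INR k + ga.

(* For [|x| < 1], [quad_geom_tail x N] is the tail [sum_(k >= N) quad k * x ^ k]. *)
Definition quad_geom_tail (x : R) (N : nat) : R :=
  x ^ N * (al * x * (1 + x) / (1 - x) ^ 3 + (2 * al * INR N + be) * x / (1 - x) ^ 2
           + quad N / (1 - x)).

Lemma sum_n_quad_geom (x : R) (N : nat) : x <> 1 ->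
  sum_n (fun k => quad k * x ^ k) N = quad_geom_tail x 0 - quad_geom_tail x (S N).
Proof.
  intros Hx. assert (H1 : 1 - x <> 0) by lra.
  induction N as [|N IH].
  - rewrite sum_O. unfold quad_geom_tail, quad. rewrite !S_INR. simpl INR.
    apply Rminus_diag_uniq. field. exact H1.
  - rewrite sum_Sn, IH. change plus with Rplus.
    unfold quad_geom_tail, quad. rewrite !S_INR. simpl pow.
    apply Rminus_diag_uniq. field. exact H1.
Qed.

Lemma abs_quad_le (N : nat) : Rabs (quad N) <= Rabs al * INR N ^ 2 + Rabs be * INR N + Rabs ga.
Proof.
  pose proof (pos_INR N).
  unfold quad. eapply Rle_trans; [apply Rabs_triang|].
  pose proof (Rabs_triang (al * INR N ^ 2) (be * INR N)).
  rewrite !Rabs_mult, (Rabs_pos_eq (INR N ^ 2)), (Rabs_pos_eq (INR N)) in *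
    by (try apply pow_le; lra).
  lra.
Qed.

(* [u] stands for [1 / (1 - x)] and [E] for an upper bound of it. *)
Lemma abs_quad_geom_tail_factor_le (x u E : R) (N : nat) :
  Rabs x <= 1 -> 0 < u <= E -> 1 <= E ->
  Rabs (al * x * (1 + x) * u ^ 3 + (2 * al * INR N + be) * x * u ^ 2 + quad N * u)
  <= (2 * Rabs al + Rabs be + Rabs ga) * (INR N + 1) ^ 2 * E ^ 3.
Proof.
  intros Hx1 Hu HE.
  pose proof (pos_INR N) as HN.
  pose proof (Rabs_pos al); pose proof (Rabs_pos be); pose proof (Rabs_pos ga).
  assert (Hx2 : Rabs (1 + x) <= 2) by (apply Rabs_le; apply Rabs_le_between in Hx1; lra).
  assert (Hu3 : u ^ 3 <= E ^ 3) by (apply pow_incr; lra).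
  assert (Hu2 : u ^ 2 <= E ^ 3) by (simpl; nra).
  assert (Hu1 : u <= E ^ 3) by (simpl; nra).
  assert (HA : Rabs (al * x * (1 + x) * u ^ 3) <= 2 * Rabs al * E ^ 3).
  { rewrite !Rabs_mult, (Rabs_pos_eq (u ^ 3)) by (apply pow_le; lra).
    replace (2 * Rabs al * E ^ 3) with (Rabs al * 1 * 2 * E ^ 3) by ring.
    apply Rmult_le_compat;
      [repeat apply Rmult_le_pos; apply Rabs_pos | apply pow_le; lra | | exact Hu3].
    apply Rmult_le_compat; [apply Rmult_le_pos; apply Rabs_pos | apply Rabs_pos | | exact Hx2].
    apply Rmult_le_compat; [apply Rabs_pos | apply Rabs_pos | lra | exact Hx1]. }
  assert (HB : Rabs ((2 * al * INR N + be) * x * u ^ 2)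
               <= (2 * Rabs al * INR N + Rabs be) * E ^ 3).
  { assert (Hc : Rabs (2 * al * INR N + be) <= 2 * Rabs al * INR N + Rabs be).
    { eapply Rle_trans; [apply Rabs_triang|].
      rewrite !Rabs_mult, Rabs_pos_eq, (Rabs_pos_eq (INR N)) by lra. lra. }
    rewrite !Rabs_mult, (Rabs_pos_eq (u ^ 2)) by (apply pow_le; lra).
    replace ((2 * Rabs al * INR N + Rabs be) * E ^ 3)
      with ((2 * Rabs al * INR N + Rabs be) * 1 * E ^ 3) by ring.
    apply Rmult_le_compat; [apply Rmult_le_pos; apply Rabs_pos | apply pow_le; lra | | exact Hu2].
    apply Rmult_le_compat; [apply Rabs_pos | apply Rabs_pos | exact Hc | exact Hx1]. }
  assert (HC : Rabs (quad N * u) <= (Rabs al * INR N ^ 2 + Rabs be * INR N + Rabs ga) * E ^ 3).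
  { rewrite Rabs_mult, (Rabs_pos_eq u) by lra.
    apply Rmult_le_compat; [apply Rabs_pos | lra | apply abs_quad_le | exact Hu1]. }
  pose proof (Rabs_triang (al * x * (1 + x) * u ^ 3 + (2 * al * INR N + be) * x * u ^ 2)
                          (quad N * u)).
  pose proof (Rabs_triang (al * x * (1 + x) * u ^ 3) ((2 * al * INR N + be) * x * u ^ 2)).
  assert (Rabs al * (INR N ^ 2 + 2 * INR N + 2) + Rabs be * (INR N + 1) + Rabs ga
          <= (2 * Rabs al + Rabs be + Rabs ga) * (INR N + 1) ^ 2) by (simpl; nra).
  assert (0 <= E ^ 3) by (apply pow_le; lra).
  nra.
Qed.

Lemma quad_geom_tail_bound (x rho : R) (N : nat) : 0 <= rho < 1 -> Rabs x <= rho ->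
  Rabs (quad_geom_tail x N)
  <= (2 * Rabs al + Rabs be + Rabs ga) / (1 - rho) ^ 3 * ((INR N + 1) ^ 2 * rho ^ N).
Proof.
  intros Hrho Hx.
  apply Rabs_le_between in Hx as Hx'.
  set (E := / (1 - rho)).
  set (u := / (1 - x)).
  assert (HE : 1 <= E) by (unfold E; rewrite <- Rinv_1; apply Rinv_le_contravar; lra).
  assert (Hu : 0 < u <= E).
  { unfold u, E. split; [apply Rinv_0_lt_compat; lra | apply Rinv_le_contravar; lra]. }
  assert (HxN : Rabs (x ^ N) <= rho ^ N).
  { rewrite <- RPow_abs. apply pow_incr. split; [apply Rabs_pos | lra]. }
  unfold quad_geom_tail. fold u E.
  replace (al * x * (1 + x) / (1 - x) ^ 3 + (2 * al * INR N + be) * x / (1 - x) ^ 2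
           + quad N / (1 - x))
    with (al * x * (1 + x) * u ^ 3 + (2 * al * INR N + be) * x * u ^ 2 + quad N * u)
    by (unfold u; rewrite !pow_inv; field; lra).
  rewrite Rabs_mult.
  replace ((2 * Rabs al + Rabs be + Rabs ga) / (1 - rho) ^ 3 * ((INR N + 1) ^ 2 * rho ^ N))
    with (rho ^ N * ((2 * Rabs al + Rabs be + Rabs ga) * (INR N + 1) ^ 2 * E ^ 3))
    by (unfold E; rewrite pow_inv; field; lra).
  apply Rmult_le_compat; [apply Rabs_pos | apply Rabs_pos | exact HxN |].
  apply abs_quad_geom_tail_factor_le; [apply Rabs_le; lra | exact Hu | exact HE].
Qed.

End QuadraticGeometric.

Lemma is_lim_seq_poly_geom (j : nat) (rho : R) : 0 < rho < 1 ->
  is_lim_seq (fun n => (INR n + 1) ^ j * rho ^ n) 0.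
Proof.
  intros Hrho.
  set (a := fun n : nat => (INR n + 1) ^ j * rho ^ n).
  assert (Ha : forall n, 0 < a n).
  { intros n. pose proof (pos_INR n). apply Rmult_lt_0_compat; apply pow_lt; lra. }
  apply (is_lim_seq_ext (fun n => Rabs (a n))).
  { intros n. apply Rabs_pos_eq. apply Rlt_le, Ha. }
  apply ex_series_lim_0, (ex_series_DAlembert _ rho); [lra | intros n; specialize (Ha n); lra |].
  apply (is_lim_seq_ext (fun n => rho * (1 + / (INR n + 1)) ^ j)).
  - intros n. pose proof (pos_INR n).
    rewrite Rabs_pos_eq by (apply Rlt_le, Rdiv_lt_0_compat; apply Ha).
    unfold a. rewrite S_INR.
    replace (INR n + 1 + 1) with ((1 + / (INR n + 1)) * (INR n + 1)) by (field; lra).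
    rewrite Rpow_mult_distr. simpl pow. field.
    split; [apply pow_nonzero | apply pow_nonzero]; lra.
  - replace (Finite rho) with (Finite (rho * (1 + 0) ^ j))
      by (f_equal; rewrite Rplus_0_r, pow1; ring).
    apply (is_lim_seq_continuous (fun y => rho * (1 + y) ^ j)).
    + apply continuity_pt_filterlim.
      apply (@ex_derive_continuous R_AbsRing R_NormedModule (fun y => rho * (1 + y) ^ j)).
      auto_derive. exact I.
    + apply (is_lim_seq_ext (fun n => / INR (S n))); [intros n; rewrite S_INR; reflexivity|].
      replace (Finite 0) with (Rbar_inv p_infty) by reflexivity.
      apply is_lim_seq_inv; [apply (is_lim_seq_incr_1 INR), is_lim_seq_INR | discriminate].
Qed.

Lemma is_RInt_sum_n (f : nat -> R -> R) (I : nat -> R) (a b : R) (N : nat) :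
  (forall k, is_RInt (f k) a b (I k)) ->
  is_RInt (fun t => sum_n (fun k => f k t) N) a b (sum_n I N).
Proof.
  intros Hf. induction N as [|N IH].
  - apply (is_RInt_ext (f 0%nat)); [intros; rewrite sum_O; reflexivity|].
    rewrite sum_O. apply Hf.
  - apply (is_RInt_ext (fun t => sum_n (fun k => f k t) N + f (S N) t)).
    + intros; rewrite sum_Sn; reflexivity.
    + rewrite sum_Sn. exact (is_RInt_plus _ _ _ _ _ _ IH (Hf (S N))).
Qed.

Lemma is_series_RInt_approx (f : nat -> R -> R) (I : nat -> R) (h : R -> R)
    (a b V : R) (e : nat -> R) :
  a <= b ->
  (forall k, is_RInt (f k) a b (I k)) ->
  is_RInt h a b V ->
  (forall N t, a <= t <= b -> Rabs (h t - sum_n (fun k => f k t) N) <= e N) ->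
  is_lim_seq e 0 ->
  is_series I V.
Proof.
  intros Hab Hf Hh Hbound He.
  assert (Herr : forall N, Rabs (V - sum_n I N) <= (b - a) * e N).
  { intros N.
    assert (Hd : is_RInt (fun t => h t - sum_n (fun k => f k t) N) a b (V - sum_n I N))
      by exact (is_RInt_minus _ _ _ _ _ _ Hh (is_RInt_sum_n f I a b N Hf)).
    rewrite <- (is_RInt_unique _ _ _ _ Hd).
    apply abs_RInt_le_const; [exact Hab | eexists; exact Hd | apply Hbound]. }
  assert (Hlim : is_lim_seq (fun N => (b - a) * e N) 0).
  { replace (Finite 0) with (Rbar_mult (b - a) 0) by (simpl; f_equal; ring).
    apply is_lim_seq_scal_l, He. }
  enough (Hs : is_lim_seq (sum_n I) V) by exact Hs.
  apply (is_lim_seq_le_le (fun N => V - (b - a) * e N) _ (fun N => V + (b - a) * e N)).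
  - intros N. specialize (Herr N). apply Rabs_le_between in Herr. lra.
  - replace (Finite V) with (Finite (V - 0)) by (f_equal; ring).
    apply is_lim_seq_minus'; [apply is_lim_seq_const | exact Hlim].
  - replace (Finite V) with (Finite (V + 0)) by (f_equal; ring).
    apply is_lim_seq_plus'; [apply is_lim_seq_const | exact Hlim].
Qed.

Definition binom3_integrand (q a b t : R) : R :=
  quad_geom_tail (3 * a) (a - 3 * b) (- b) (t * (1 - t) ^ 2 / q) 0.

Lemma is_RInt_binom3_term (q a b : R) (k : nat) : q <> 0 ->
  is_RInt (fun t => quad (3 * a) (a - 3 * b) (- b) k * (t * (1 - t) ^ 2 / q) ^ k) 0 1
    ((a * INR k - b) / (q ^ k * binom3 k)).
Proof.
  intros Hq.
  replace ((a * INR k - b) / (q ^ k * binom3 k))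
    with (quad (3 * a) (a - 3 * b) (- b) k / q ^ k * beta_nat k (2 * k)).
  - apply (is_RInt_ext (fun t => quad (3 * a) (a - 3 * b) (- b) k / q ^ k
                                 * (t ^ k * (1 - t) ^ (2 * k)))).
    + intros t _. apply Rminus_diag_uniq. unfold Rdiv.
      rewrite !Rpow_mult_distr, pow_mult, pow_inv. ring.
    + apply (is_RInt_scal _ _ _ _ _ (is_RInt_beta_nat k (2 * k))).
  - (* quad k = (a k - b) (3 k + 1) and 1 / binom3 k = (3 k + 1) beta_nat k (2 k) *)
    assert (Hk : INR (3 * k + 1) <> 0) by (apply not_0_INR; lia).
    replace (beta_nat k (2 * k)) with (/ binom3 k / INR (3 * k + 1))
      by (rewrite inv_binom3; field; exact Hk).
    pose proof (binom3_pos k). pose proof (pow_nonzero q k Hq).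
    unfold quad. rewrite plus_INR, mult_INR in *. simpl INR in *.
    field. repeat split; lra.
Qed.

Lemma abs_binom3_weight_le (q t : R) : q <> 0 -> 0 <= t <= 1 ->
  Rabs (t * (1 - t) ^ 2 / q) <= 4 / (27 * Rabs q).
Proof.
  intros Hq Ht.
  assert (Hq0 : 0 < Rabs q) by (apply Rabs_pos_lt, Hq).
  unfold Rdiv. rewrite Rabs_mult, Rabs_inv.
  rewrite Rabs_pos_eq by (apply Rmult_le_pos; [lra | apply pow2_ge_0]).
  replace (4 * / (27 * Rabs q)) with (4 / 27 * / Rabs q) by (field; lra).
  apply Rmult_le_compat_r; [apply Rlt_le, Rinv_0_lt_compat, Hq0|].
  (* t (1 - t)^2 is maximal at t = 1/3 *)
  assert (0 <= (t - 1 / 3) ^ 2 * (4 / 3 - t)) by (apply Rmult_le_pos; [apply pow2_ge_0 | lra]).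
  simpl in *. nra.
Qed.

Lemma is_series_binom3 (q a b : R) (F : R -> R) :
  4 / 27 < Rabs q ->
  (forall t, 0 <= t <= 1 -> is_derive F t (binom3_integrand q a b t)) ->
  is_series (fun k => (a * INR k - b) / (q ^ k * binom3 k)) (F 1 - F 0).
Proof.
  intros Hq HF.
  assert (Hq0 : q <> 0) by (intros E; rewrite E, Rabs_R0 in Hq; lra).
  set (rho := 4 / (27 * Rabs q)).
  assert (Hrho : 0 < rho < 1).
  { unfold rho. split; [apply Rdiv_lt_0_compat; lra|].
    apply Rlt_div_l; lra. }
  set (w := fun t => t * (1 - t) ^ 2 / q).
  assert (Hw : forall t, 0 <= t <= 1 -> Rabs (w t) <= rho)
    by (intros t Ht; apply abs_binom3_weight_le; assumption).
  assert (Hw1 : forall t, 0 <= t <= 1 -> 1 - w t <> 0).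
  { intros t Ht. specialize (Hw t Ht). apply Rabs_le_between in Hw. lra. }
  set (K := (2 * Rabs (3 * a) + Rabs (a - 3 * b) + Rabs (- b)) / (1 - rho) ^ 3).
  apply (is_series_RInt_approx (fun k t => quad (3 * a) (a - 3 * b) (- b) k * w t ^ k) _
           (binom3_integrand q a b) 0 1 _
           (fun N => K * ((INR (S N) + 1) ^ 2 * rho ^ S N))).
  - lra.
  - intros k. apply is_RInt_binom3_term, Hq0.
  - apply (is_RInt_derive F); rewrite Rmin_left, Rmax_right by lra; [exact HF|].
    intros t Ht. apply (@ex_derive_continuous R_AbsRing R_NormedModule).
    specialize (Hw1 t Ht). unfold binom3_integrand, quad_geom_tail, w in *.
    auto_derive. repeat split;
      first [exact Hq0 | exact Hw1 | exact (pow_nonzero _ 2 Hw1) | exact (pow_nonzero _ 3 Hw1)].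
  - intros N t Ht.
    unfold binom3_integrand. fold (w t).
    rewrite sum_n_quad_geom by (specialize (Hw1 t Ht); lra).
    replace (quad_geom_tail (3 * a) (a - 3 * b) (- b) (w t) 0
             - (quad_geom_tail (3 * a) (a - 3 * b) (- b) (w t) 0
                - quad_geom_tail (3 * a) (a - 3 * b) (- b) (w t) (S N)))
      with (quad_geom_tail (3 * a) (a - 3 * b) (- b) (w t) (S N)) by ring.
    apply quad_geom_tail_bound; [lra | apply Hw, Ht].
  - replace (Finite 0) with (Rbar_mult K 0) by (simpl; f_equal; ring).
    apply is_lim_seq_scal_l.
    apply (is_lim_seq_incr_1 (fun N => (INR N + 1) ^ 2 * rho ^ N)).
    apply is_lim_seq_poly_geom, Hrho.
Qed.

Lemma c_const_cubic : 0 < c_const < 1 /\ 4 * c_const ^ 3 + 27 * c_const - 27 = 0.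
Proof.
  set (x := 1 + sqrt 2).
  assert (Hs2 : sqrt 2 * sqrt 2 = 2) by (apply sqrt_sqrt; lra).
  assert (Hs2p : 1 < sqrt 2) by (rewrite <- sqrt_1; apply sqrt_lt_1; lra).
  assert (Hx : 0 < x) by (unfold x; lra).
  set (y := Rpower x (1 / 3)).
  assert (Hy0 : 0 < y) by (unfold y, Rpower; apply exp_pos).
  assert (Hy3 : y ^ 3 = x).
  { unfold y. rewrite <- Rpower_pow by (unfold Rpower; apply exp_pos).
    rewrite Rpower_mult. replace (1 / 3 * INR 3) with 1 by (simpl; field). apply Rpower_1, Hx. }
  assert (Hy1 : 1 < y).
  { destruct (Rle_lt_dec y 1) as [H|H]; [|exact H].
    assert (y ^ 3 <= 1) by (rewrite <- (pow1 3); apply pow_incr; lra).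
    unfold x in Hy3; lra. }
  unfold c_const. fold x. fold y. rewrite Rpower_Ropp. fold y.
  set (s := y - / y).
  (* Cardano: s^3 + 3 s = y^3 - y^-3 = (1 + sqrt 2) - (sqrt 2 - 1) *)
  assert (Hs3 : s ^ 3 + 3 * s - 2 = 0).
  { assert (Hyi : / y ^ 3 = sqrt 2 - 1).
    { rewrite Hy3. unfold x. field_simplify_eq; [|lra].
      replace ((sqrt 2 - 1) * (1 + sqrt 2)) with (sqrt 2 * sqrt 2 - 1) by ring. lra. }
    unfold s. replace ((y - / y) ^ 3 + 3 * (y - / y) - 2) with (y ^ 3 - / y ^ 3 - 2)
      by (field; lra).
    rewrite Hyi, Hy3. unfold x. ring. }
  assert (Hs0 : 0 < s).
  { unfold s. assert (/ y < 1) by (rewrite <- Rinv_1; apply Rinv_lt_contravar; lra). lra. }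
  split; [split|]; [lra | nra |].
  replace (4 * (3 / 2 * s) ^ 3 + 27 * (3 / 2 * s) - 27) with (27 / 2 * (s ^ 3 + 3 * s - 2))
    by field.
  rewrite Hs3. ring.
Qed.

Lemma inv_c_const_spec : 1 < 1 / c_const < 2 /\ (1 / c_const - 1) * (1 / c_const) ^ 2 = 4 / 27.
Proof.
  destruct c_const_cubic as [[Hc0 Hc1] Hc].
  repeat split.
  - apply Rlt_div_r; lra.
  - apply Rlt_div_l; nra.
  - field_simplify_eq; [nra | lra].
Qed.

Lemma abs_binom3_ratio_gt (n : R) : n < - (1 / 3) \/ n > 1 / c_const ->
  4 / 27 < Rabs ((1 - n) * n ^ 2).
Proof.
  destruct inv_c_const_spec as [[Hm1 _] Hm]. set (m := 1 / c_const) in *.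
  intros [Hn | Hn].
  - rewrite Rabs_pos_eq by (apply Rmult_le_pos; [lra | apply pow2_ge_0]).
    (* (1 - n) n^2 - 4/27 = - (n + 1/3) (n - 2/3)^2 *)
    assert (0 < - (n + 1 / 3) * (n - 2 / 3) ^ 2)
      by (apply Rmult_lt_0_compat; [lra | apply pow2_gt_0; lra]).
    simpl in *. nra.
  - rewrite Rabs_left by (assert (0 < n ^ 2) by (apply pow2_gt_0; lra); nra).
    (* (n - 1) n^2 - (m - 1) m^2 = (n - m) (n^2 + n m + m^2 - n - m) *)
    assert (0 < (n - m) * (n ^ 2 + n * m + m ^ 2 - n - m))
      by (apply Rmult_lt_0_compat; nra).
    simpl in *. nra.
Qed.

Definition factor_lin (n t : R) : R := 1 - n - t.
Definition factor_quad (n t : R) : R := t ^ 2 - (1 + n) * t + n ^ 2.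

Lemma binom3_ratio_factor (n t : R) :
  (1 - n) * n ^ 2 - t * (1 - t) ^ 2 = factor_lin n t * factor_quad n t.
Proof. unfold factor_lin, factor_quad. ring. Qed.

Lemma factor_lin_quad_sign (n t : R) : n < - (1 / 3) \/ 1 < n -> 0 <= t <= 1 ->
  factor_lin n t <> 0 /\ 0 < factor_quad n t.
Proof.
  intros Hn Ht. unfold factor_lin, factor_quad. split; [destruct Hn; lra|].
  (* 4 factor_quad = (2 t - 1 - n)^2 + (3 n + 1) (n - 1) *)
  assert (0 < (3 * n + 1) * (n - 1)) by (destruct Hn; nra).
  assert (0 <= (2 * t - 1 - n) ^ 2) by apply pow2_ge_0.
  simpl in *. nra.
Qed.

(* Partial fractions of [binom3_integrand] for [q = (1 - n) n^2], whose denominator is a power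
   of [factor_lin n t * factor_quad n t] by [binom3_ratio_factor]. *)
Definition antideriv_log (n t : R) : R :=
  ((-18*n^6+162*n^7-432*n^8+504*n^9-270*n^10+54*n^11)
   + (34*n^4-332*n^5+751*n^6-831*n^7+810*n^8-756*n^9+405*n^10-81*n^11) * t
   + (-4*n^2+16*n^3-136*n^4+1322*n^5-2974*n^6+2478*n^7-702*n^8) * t^2
   + (12*n^2-48*n^3+180*n^4-1584*n^5+3600*n^6-3024*n^7+864*n^8) * t^3
   + (-12*n^2+48*n^3-90*n^4+594*n^5-1350*n^6+1134*n^7-324*n^8) * t^4
   + (4*n^2-16*n^3+12*n^4) * t^5)
  / (factor_lin n t ^ 2 * factor_quad n t ^ 2)
  + 4 * ((1 - n) * n ^ 2) * ln (factor_lin n t ^ 2 / factor_quad n t).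

Lemma antideriv_log_derive (n t : R) :
  (1 - n) * n ^ 2 <> 0 -> factor_lin n t <> 0 -> 0 < factor_quad n t ->
  is_derive (antideriv_log n) t (binom3_integrand ((1 - n) * n ^ 2) (a_n n) (b_n n) t).
Proof.
  intros Hq HL HQ.
  assert (HD : (1 - n) * n ^ 2 - t * (1 - t) ^ 2 <> 0).
  { rewrite binom3_ratio_factor. apply Rmult_integral_contrapositive. split; lra. }
  assert (0 < factor_lin n t ^ 2 / factor_quad n t)
    by (apply Rdiv_lt_0_compat; [apply pow2_gt_0|]; assumption).
  assert (n <> 0) by (intros E; apply Hq; rewrite E; ring).
  assert (1 - n <> 0) by (intros E; apply Hq; rewrite E; ring).
  assert (HLQ : factor_lin n t ^ 2 * factor_quad n t ^ 2 <> 0)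
    by (apply Rmult_integral_contrapositive; split; apply pow_nonzero; lra).
  unfold antideriv_log. unfold factor_lin, factor_quad in *. auto_derive.
  - repeat split; first [exact HLQ | assumption | lra].
  - unfold binom3_integrand, quad_geom_tail, quad, a_n, b_n. simpl INR.
    apply Rminus_diag_uniq. field.
    repeat split; try assumption; intro E; lra.
Qed.

Lemma antideriv_log_values (n : R) : n < - (1 / 3) \/ 1 < n ->
  antideriv_log n 1 - antideriv_log n 0
  = 3 * n ^ 2 * (n - 1) * (4 * ln (1 - 1 / n) - 9 * (3 * n ^ 2 - 6 * n + 1)).
Proof.
  intros Hn.
  assert (Hn0 : n <> 0) by lra. assert (Hn1 : n - 1 <> 0) by lra.
  set (r := 1 - 1 / n).
  assert (Hr : 0 < r).
  { unfold r. replace (1 - 1 / n) with ((n - 1) * n / (n * n)) by (field; exact Hn0).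
    apply Rdiv_lt_0_compat; destruct Hn; nra. }
  unfold antideriv_log, factor_lin, factor_quad.
  replace ((1 - n - 1) ^ 2 / (1 ^ 2 - (1 + n) * 1 + n ^ 2)) with (/ r)
    by (unfold r; field; repeat split; try assumption; intro E; destruct Hn; nra).
  replace ((1 - n - 0) ^ 2 / (0 ^ 2 - (1 + n) * 0 + n ^ 2)) with (r * r)
    by (unfold r; field; exact Hn0).
  rewrite ln_Rinv, ln_mult by exact Hr.
  field. repeat split; intro E; destruct Hn; nra.
Qed.

Lemma series_ii (n : R) : n < - (1 / 3) \/ n > 1 / c_const ->
  is_series (fun k => (a_n n * INR k - b_n n) / (((1 - n) * n ^ 2) ^ k * binom3 k))
    (3 * n ^ 2 * (n - 1) * (4 * ln (1 - 1 / n) - 9 * (3 * n ^ 2 - 6 * n + 1))).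
Proof.
  intros Hn.
  assert (Hn' : n < - (1 / 3) \/ 1 < n) by (destruct inv_c_const_spec; lra).
  pose proof (abs_binom3_ratio_gt n Hn) as Hq.
  rewrite <- antideriv_log_values by exact Hn'.
  apply is_series_binom3; [exact Hq|].
  intros t Ht. destruct (factor_lin_quad_sign n t Hn' Ht).
  apply antideriv_log_derive; try assumption.
  intros E. rewrite E, Rabs_R0 in Hq. lra.
Qed.

(* Partial fractions again, now for [q = 3/8 = (1 - n) n^2] at [n = -1/2]; here [factor_quad]
   has no real root and the logarithm becomes an arctangent. *)
Definition antideriv_atan (t : R) : R :=
  (-243/32 + 1737/64 * t - 159/4 * t ^ 2 + 72 * t ^ 3 - 72 * t ^ 4 + 24 * t ^ 5)
  / (factor_lin (-1/2) t ^ 2 * factor_quad (-1/2) t ^ 2)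
  + 32 * sqrt 3 * atan ((4 * t - 1) / sqrt 3).

Lemma antideriv_atan_derive (t : R) : 0 <= t <= 1 ->
  is_derive antideriv_atan t (binom3_integrand (3 / 8) 49 (-1) t).
Proof.
  intros Ht.
  assert (Hs0 : 0 < sqrt 3) by (apply sqrt_lt_R0; lra).
  assert (Hs2 : sqrt 3 ^ 2 = 3) by (apply pow2_sqrt; lra).
  destruct (factor_lin_quad_sign (-1/2) t) as [HL HQ]; [lra | exact Ht |].
  assert (HLQ : factor_lin (-1/2) t ^ 2 * factor_quad (-1/2) t ^ 2 <> 0)
    by (apply Rmult_integral_contrapositive; split; apply pow_nonzero; lra).
  set (s := sqrt 3) in *.
  assert (Hatan : is_derive (fun x => atan ((4 * x - 1) / s)) t
                    (4 / s * / (1 + ((4 * t - 1) / s) ^ 2))).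
  { apply (is_derive_comp atan (fun x => (4 * x - 1) / s)).
    - apply is_derive_Reals, derivable_pt_lim_atan.
    - auto_derive; [lra|]. field. lra. }
  evar (d : R).
  assert (Hrat : is_derive (fun x => (-243/32 + 1737/64 * x - 159/4 * x ^ 2 + 72 * x ^ 3
                                      - 72 * x ^ 4 + 24 * x ^ 5)
                                     / (factor_lin (-1/2) x ^ 2 * factor_quad (-1/2) x ^ 2)) t d).
  { unfold factor_lin, factor_quad in *. auto_derive; [repeat split; exact HLQ|].
    unfold d. reflexivity. }
  replace (binom3_integrand (3 / 8) 49 (-1) t)
    with (plus d (32 * s * (4 / s * / (1 + ((4 * t - 1) / s) ^ 2)))).
  { exact (is_derive_plus _ _ t _ _ Hrat (is_derive_scal _ t (32 * s) _ Hatan)). }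
  unfold d. change plus with Rplus.
  replace (((4 * t - 1) / s) ^ 2) with ((4 * t - 1) ^ 2 / 3)
    by (unfold Rdiv; rewrite Rpow_mult_distr, pow_inv, Hs2; reflexivity).
  assert (Hw : Rabs (t * (1 - t) ^ 2 / (3 / 8)) <= 4 / (27 * Rabs (3 / 8)))
    by (apply abs_binom3_weight_le; [lra | exact Ht]).
  rewrite (Rabs_pos_eq (3 / 8)) in Hw by lra. apply Rabs_le_between in Hw.
  unfold binom3_integrand, quad_geom_tail, quad, factor_lin, factor_quad in *. simpl INR.
  apply Rminus_diag_uniq. field.
  assert (0 <= (4 * t - 1) ^ 2) by apply pow2_ge_0.
  repeat split; try lra; simpl in *; nra.
Qed.

Lemma antideriv_atan_values : antideriv_atan 1 - antideriv_atan 0 = 81 + 16 * sqrt 3 * PI.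
Proof.
  assert (Hs0 : 0 < sqrt 3) by (apply sqrt_lt_R0; lra).
  assert (Hs2 : sqrt 3 * sqrt 3 = 3) by (apply sqrt_sqrt; lra).
  pose proof PI_RGT_0.
  unfold antideriv_atan, factor_lin, factor_quad.
  replace ((4 * 1 - 1) / sqrt 3) with (tan (PI / 3))
    by (rewrite tan_PI3; field_simplify_eq; lra).
  replace ((4 * 0 - 1) / sqrt 3) with (- tan (PI / 6)) by (rewrite tan_PI6; field; lra).
  rewrite atan_opp, !atan_tan by lra.
  field.
Qed.

Lemma div_pow_3_8 (X : R) (k : nat) :
  X / ((3 / 8) ^ k * binom3 k) = X * 8 ^ k / (3 ^ k * binom3 k).
Proof.
  pose proof (binom3_pos k).
  pose proof (pow_nonzero 3 k ltac:(lra)). pose proof (pow_nonzero 8 k ltac:(lra)).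
  unfold Rdiv. rewrite Rpow_mult_distr, pow_inv. field. repeat split; lra.
Qed.

Lemma series_i : is_series (fun k => (49 * INR k + 1) * 8 ^ k / (3 ^ k * binom3 k))
                   (81 + 16 * sqrt 3 * PI).
Proof.
  apply (is_series_ext (fun k => (49 * INR k - -1) / ((3 / 8) ^ k * binom3 k))).
  { intros k. rewrite div_pow_3_8. f_equal. f_equal. ring. }
  rewrite <- antideriv_atan_values.
  apply is_series_binom3; [rewrite Rabs_pos_eq; lra | exact antideriv_atan_derive].
Qed.

Lemma series_ii_rescaled (n lam L A B Q V : R) :
  n < - (1 / 3) \/ n > 1 / c_const ->
  (1 - n) * n ^ 2 = Q -> a_n n = lam * A -> b_n n = lam * B -> lam <> 0 ->
  ln (1 - 1 / n) = L ->
  3 * n ^ 2 * (n - 1) * (4 * L - 9 * (3 * n ^ 2 - 6 * n + 1)) = lam * V ->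
  is_series (fun k => (A * INR k - B) / (Q ^ k * binom3 k)) V.
Proof.
  intros Hn HQ Ha Hb Hlam HL HV.
  pose proof (abs_binom3_ratio_gt n Hn) as Hq.
  rewrite HQ in Hq.
  assert (HQ0 : Q <> 0) by (intros E; rewrite E, Rabs_R0 in Hq; lra).
  pose proof (is_series_scal (/ lam) _ _ (series_ii n Hn)) as G.
  rewrite HL, HV in G.
  replace V with (scal (/ lam) (lam * V))
    by (unfold scal; simpl; unfold mult; simpl; field; exact Hlam).
  revert G. apply is_series_ext. intros k.
  rewrite Ha, Hb, HQ. unfold scal; simpl; unfold mult; simpl.
  pose proof (binom3_pos k). pose proof (pow_nonzero Q k HQ0).
  field. repeat split; lra.
Qed.

Ltac solve_instance :=
  first [ left; lra
        | right; destruct inv_c_const_spec; lra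
        | lra
        | unfold a_n, b_n; field
        | f_equal; field
        | rewrite <- ln_Rinv by lra; f_equal; field ].

Theorem corollary1p1 :
  (* (i) *)
  is_series (fun k : nat => (49 * INR k + 1) * 8 ^ k / (3 ^ k * binom3 k))
    (81 + 16 * sqrt 3 * PI)
  /\
  (* (ii) general identity *)
  (forall n : R, n < - (1 / 3) \/ n > 1 / c_const ->
     is_series
       (fun k : nat => (a_n n * INR k - b_n n) / (((1 - n) * n ^ 2) ^ k * binom3 k))
       (3 * n ^ 2 * (n - 1) * (4 * ln (1 - 1 / n) - 9 * (3 * n ^ 2 - 6 * n + 1))))
  /\
  (* (ii) particular cases *)
  is_series (fun k : nat => (275 * INR k - 158) / (2 ^ k * binom3 k))
    (6 * ln 2 - 135)
  /\ is_series (fun k : nat => (728 * INR k - 17) / ((-4) ^ k * binom3 k))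
    (-54 - 24 * ln 2)
  /\ is_series (fun k : nat => (1813 * INR k - 2707) * 8 ^ k / (3 ^ k * binom3 k))
    (9 * (16 * ln 3 - 171))
  /\ is_series (fun k : nat => (5635 * INR k - 1156) / ((-18) ^ k * binom3 k))
    (54 * ln (2 / 3) - 1215)
  /\ is_series (fun k : nat => (63050 * INR k - 15959) / ((-48) ^ k * binom3 k))
    (72 * (4 * ln (3 / 4) - 225))
  /\ is_series (fun k : nat => (112216 * INR k - 30847) / ((-100) ^ k * binom3 k))
    (300 * ln (4 / 5) - 31050)
  /\ is_series (fun k : nat => (615296 * INR k - 176777) / ((-180) ^ k * binom3 k))
    (270 * (4 * ln (5 / 6) - 657))
  /\ is_series (fun k : nat => (710809 * INR k - 209926) / ((-294) ^ k * binom3 k))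
    (441 * (2 * ln (6 / 7) - 477))
  /\ is_series (fun k : nat => (2910050 * INR k - 875807) / ((-448) ^ k * binom3 k))
    (672 * (4 * ln (7 / 8) - 1305))
  /\ is_series (fun k : nat => (2721250 * INR k - 830317) / ((-648) ^ k * binom3 k))
    (972 * (2 * ln (8 / 9) - 855))
  /\ is_series (fun k : nat => (9490712 * INR k - 2926289) / ((-900) ^ k * binom3 k))
    (1350 * (4 * ln (9 / 10) - 2169))
  /\ is_series (fun k : nat => (7825423 * INR k - 2432776) / ((-1210) ^ k * binom3 k))
    (1815 * (2 * ln (10 / 11) - 1341)).
Proof.
  split; [exact series_i|].
  split; [exact series_ii|].
  repeat split.
  - apply (series_ii_rescaled (-1) (-4) (ln 2)); solve_instance.
  - apply (series_ii_rescaled 2 2 (- ln 2)); solve_instance.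
  - apply (is_series_ext _ _ _ (fun k => div_pow_3_8 _ k)).
    apply (series_ii_rescaled (-1/2) (-1/32) (ln 3)); solve_instance.
  - apply (series_ii_rescaled 3 4 (ln (2 / 3))); solve_instance.
  - apply (series_ii_rescaled 4 2 (ln (3 / 4))); solve_instance.
  - apply (series_ii_rescaled 5 4 (ln (4 / 5))); solve_instance.
  - apply (series_ii_rescaled 6 2 (ln (5 / 6))); solve_instance.
  - apply (series_ii_rescaled 7 4 (ln (6 / 7))); solve_instance.
  - apply (series_ii_rescaled 8 2 (ln (7 / 8))); solve_instance.
  - apply (series_ii_rescaled 9 4 (ln (8 / 9))); solve_instance.
  - apply (series_ii_rescaled 10 2 (ln (9 / 10))); solve_instance.
  - apply (series_ii_rescaled 11 4 (ln (10 / 11))); solve_instance.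
Qed.
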